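(* Let $r\ge 1$, $m=2^r$, and let $n$ be a positive integer with $m\mid n$. Let $b$ be a positive integer having property $\mathcal{P}$ with respect to $n$. If $x^n+b^m$ is reducible over $\mathbb{Z}$, then both $b$ and $n/m$ are even.
   Context: For a positive integer $N$, a positive integer $b$ has property $\mathcal{P}$ with respect to $N$ if either $b$ is a prime number, or $b=(p_1^{b_1}p_2^{b_2}\cdots p_k^{b_k})^d$ where $k\ge 2$, $p_1,\dots,p_k$ are distinct primes, $b_1,\dots,b_k\ge 1$, $\gcd(b_1,\ldots,b_k)=1$, and $d$ is a positive integer with $\gcd(d,N)=1$. A monic polynomial in $\mathbb{Z}[x]$ of degree $\ge 1$ is reducible over $\mathbb{Z}$ if it is a product of two polynomials in $\mathbb{Z}[x]$ of degree at least $1$. *)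

From mathcomp Require Import all_boot all_order all_algebra.
Set Implicit Arguments. Unset Strict Implicit. Unset Printing Implicit Defensive.
Import Order.TTheory GRing.Theory Num.Theory.

(* Property P of b with respect to N.  The factorization is given as a list
   of (prime, exponent) pairs [(p_1,b_1);...;(p_k,b_k)]. *)
Definition propP (N b : nat) : Prop :=
  prime b \/
  exists (s : seq (nat * nat)) (d : nat),
    [/\ 2 <= size s, uniq (map fst s),
        all (fun pe => prime pe.1) s & all (fun pe => 0 < pe.2) s] /\
    [/\ foldr gcdn 0 (map snd s) = 1, 0 < d, coprime d N &
        b = (\prod_(pe <- s) pe.1 ^ pe.2) ^ d].

Definition reducible_Z (f : {poly int}) : Prop :=
  exists g h : {poly int}, [/\ (1 < size g)%N, (1 < size h)%N & f = (g * h)%R].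

From mathcomp Require Import all_boot all_order all_algebra.
From mathcomp Require Import falgebra fieldext algC algnum zify.
Set Implicit Arguments. Unset Strict Implicit. Unset Printing Implicit Defensive.
Import Order.TTheory GRing.Theory Num.Theory.
Local Open Scope ring_scope.

(* Let m = 2^r divide n, c = b^m, and suppose X^n + c = g h over Z with g, h
   nonconstant.  A complex root x of g satisfies x^n = -c and has degree
   D = [Q(x) : Q] < n.  The proof compares three divisibility facts on D:
   - Norm: N(x)^n = (-c)^D = c^D for the integer norm N(x) (n is even), so b^(mD)
     is an n-th power; property P then forces n | mD, i.e. q := n/m divides D.
   - Eisenstein at 2: for t > 0 and c' = 1 mod 4, (X+1)^(2^t) + c' is
     irreducible over Q (it is X^(2^t) mod 2 and its constant term is 2 mod 4),
     so any y in Q(x) with y^(2^t) = -c' has degree 2^t, and by the tower law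
     2^t | D.
   - If b is odd, c = 1 mod 4 and y = x^q' (n = 2^t q', q' odd) gives 2^t | D;
     if q is odd, y = x^q / b satisfies y^m = -1 and gives m | D.  In both cases
     n | D, contradicting 0 < D < n. *)

Definition factor_prod (s : seq (nat * nat)) : nat := \prod_(pe <- s) pe.1 ^ pe.2.

Lemma factor_prod_gt0 (s : seq (nat * nat)) :
  all (fun pe => prime pe.1) s -> (0 < factor_prod s)%N.
Proof.
rewrite /factor_prod; elim: s => [|[q k] s IH] /=; first by rewrite big_nil.
by case/andP=> pq ps; rewrite big_cons muln_gt0 expn_gt0 prime_gt0 ?IH.
Qed.

Lemma logn_factor_prod (s : seq (nat * nat)) p : all (fun pe => prime pe.1) s ->
  logn p (factor_prod s) = (\sum_(pe <- s) (p == pe.1) * pe.2)%N.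
Proof.
rewrite /factor_prod; elim: s => [|[q k] s IH] /=; first by rewrite !big_nil logn1.
case/andP=> pq ps.
have s_gt0 : (0 < \prod_(pe <- s) pe.1 ^ pe.2)%N := factor_prod_gt0 ps.
rewrite !big_cons lognM //; last by rewrite expn_gt0 prime_gt0.
by rewrite lognX (logn_prime _ pq) IH // mulnC.
Qed.

Lemma sum_exponents_uniq (s : seq (nat * nat)) p e :
  uniq (map fst s) -> (p, e) \in s -> (\sum_(pe <- s) (p == pe.1) * pe.2)%N = e.
Proof.
elim: s => [|[q k] s IH] //= /andP[qs us]; rewrite in_cons big_cons /=.
case/orP => [/eqP [-> ->] | pes].
  rewrite eqxx mul1n big1_seq ?addn0 // => -[q' k'] /andP[_ q'k's] /=.
  have [Eq|_] := eqVneq q q'; last by rewrite mul0n.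
  by move: qs; rewrite Eq => /negP[]; apply/mapP; exists (q', k').
have /negPf-> : p != q by apply: contraNneq qs => <-; apply/mapP; exists (p, e).
by rewrite mul0n add0n IH.
Qed.

Lemma dvdn_mul_foldr_gcdn (l : seq nat) n X :
  (forall e, e \in l -> n %| X * e)%N -> (n %| X * foldr gcdn 0 l)%N.
Proof.
elim: l => [|e l IH] He /=; first by rewrite muln0 dvdn0.
rewrite muln_gcdr dvdn_gcd He ?mem_head // IH // => e' e'l.
by rewrite He // in_cons e'l orbT.
Qed.

Lemma propP_dvd_exponent (n b k T : nat) : propP n b ->
  (T ^ n = b ^ k)%N -> (n %| k)%N.
Proof.
move=> [pb | [s [d [[_ us ps _] [g1 _ cd Db]]]]] Tn.
  have := congr1 (logn b) Tn; rewrite !lognX (logn_prime _ pb) eqxx muln1 => <-.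
  exact: dvdn_mulr.
have n_dvd_exps e : e \in map snd s -> (n %| (k * d) * e)%N.
  case/mapP => -[p e'] pes /= ->.
  have pp : prime p by have := allP ps _ pes.
  have := congr1 (logn p) Tn; rewrite Db -expnM !lognX.
  rewrite -/(factor_prod s) logn_factor_prod // (sum_exponents_uniq us pes) => Ee.
  by rewrite (mulnC k d) -Ee dvdn_mulr.
have := dvdn_mul_foldr_gcdn n_dvd_exps.
by rewrite g1 muln1 Gauss_dvdl // coprime_sym.
Qed.

Lemma odd_pow_even_mod4 (b m : nat) : odd b -> ~~ odd m -> ((b ^ m) %% 4 = 1)%N.
Proof.
move=> ob em.
have -> : m = (2 * m./2)%N by rewrite -[m in LHS](odd_double_half m) (negPf em) -mul2n.
rewrite expnM -modnXm.
have -> : (b ^ 2 %% 4 = 1)%N.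
  by rewrite -(odd_double_half b) ob -mul2n; set k := b./2; rewrite expnS expn1; lia.
by rewrite exp1n.
Qed.

Local Notation intr2 := (intr : int -> 'F_2).

Lemma intr2_eq0 (x : int) : (intr2 x == 0) = (2 %| x)%Z.
Proof.
have char2 : (2 \in [pchar 'F_2])%N := pchar_Fp (isT : prime 2).
rewrite dvdzE; case: x => k; first by rewrite /= -(dvdn_pcharf char2).
by rewrite NegzE rmorphN oppr_eq0 /= -(dvdn_pcharf char2).
Qed.

(* For M a power of 2 and c odd, (X+1)^M + c reduces to X^M modulo 2; hence
   every nonconstant factor of it in Z[X] has an even constant term. *)
Lemma factor_coef0_even (M c : nat) (A B : {poly int}) :
  [pchar 'F_2].-nat M -> odd c ->
  ('X + 1) ^+ M + c%:R%:P = A * B -> (1 < size A)%N -> (2 %| A`_0)%Z.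
Proof.
move=> M2 oc DF szA.
have M0 : (0 < M)%N by case/andP: M2.
pose red2 := map_poly intr2.
have lcAB : lead_coef A * lead_coef B = 1.
  have DX : ('X + 1 : {poly int}) = 'X - (-1)%:P by rewrite polyCN opprK.
  have mX : ('X - (-1)%:P : {poly int}) ^+ M \is monic by rewrite monic_exp // monicXsubC.
  rewrite -lead_coefM -DF DX lead_coefDl ?(monicP mX) //.
  by rewrite size_exp_XsubC size_polyC; case: (_ != _); rewrite // ltnS.
have lcA : intr2 (lead_coef A) != 0.
  apply/negP => /eqP lcA0; have := congr1 intr2 lcAB.
  by rewrite rmorphM /= lcA0 mul0r rmorph1 => /eqP; rewrite eq_sym oner_eq0.
have szA2 : size (red2 A) = size A by rewrite size_map_poly_id0.
have red2AB : red2 A * red2 B = 'X^M.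
  rewrite -rmorphM /= -DF rmorphD rmorphXn /= rmorphD /= map_polyX !map_polyC /=.
  rewrite rmorph1 rmorph_nat exprDn_pchar; last by rewrite (eq_pnat _ (@pchar_poly _)).
  rewrite expr1n -Fp_nat_mod // modn2 oc -addrA addrr_pchar2 ?addr0 //.
  by rewrite pchar_poly.
have : red2 A %| ('X - 0%:P) ^+ M by rewrite subr0 -red2AB dvdp_mulr.
case/dvdp_exp_XsubCP => k _; rewrite subr0 => eqA.
have szk : size (red2 A) = k.+1 by rewrite (eqp_size eqA) size_polyXn.
have k0 : k != 0%N by rewrite -szA2 szk in szA; case: k {eqA szk} szA.
rewrite -intr2_eq0 -coef_map -/(red2 A) (eqpfP eqA) coefZ coefXn.
by case: k k0 {eqA szk} => // k _; rewrite mulr0.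
Qed.

(* Eisenstein-type criterion at 2: if t > 0 and c = 1 mod 4 then
   (X+1)^(2^t) + c has no factorization into two nonconstant factors, since
   both constant terms would be even while their product c + 1 is not 0 mod 4. *)
Lemma XaddC_pow2_indecomposable (t c : nat) (A B : {poly int}) :
  (0 < t)%N -> (c %% 4 = 1)%N ->
  ('X + 1) ^+ (2 ^ t) + c%:R%:P = A * B -> (size A <= 1)%N || (size B <= 1)%N.
Proof.
move=> t0 c4 DF; case: leqP => // szA; case: leqP => // szB; exfalso.
have M2 : [pchar 'F_2].-nat (2 ^ t)%N by rewrite pnatX pnatE // (pchar_Fp (isT : prime 2)).
have oc : odd c by rewrite -(odd_mod c (erefl : odd 4 = false)) c4.
have evA := factor_coef0_even M2 oc DF szA.
have evB : (2 %| B`_0)%Z by apply: (factor_coef0_even (B := A) M2 oc _ szB); rewrite mulrC.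
have := dvdz_mul evA evB; rewrite -coef0M -DF coefD coefC /= -horner_coef0.
rewrite !hornerE /= expr1n dvdzE.
have -> : (1 + c%:R : int) = Posz c.+1 by rewrite natz.
by move=> H; move: H c4; lia.
Qed.

Local Notation QtoC := (ratr : rat -> algC).
Local Notation pQtoC := (map_poly QtoC).
Local Notation pZtoQ := (map_poly (intr : int -> rat)).
Local Notation pZtoC := (map_poly (intr : int -> algC)).

Lemma size_exp_XaddC (R : nzRingType) n : size (('X + 1 : {poly R}) ^+ n) = n.+1.
Proof. by rewrite (_ : 'X + 1 = 'X - (-1)%:P) ?size_exp_XsubC // polyCN opprK. Qed.

Lemma pZtoQtoC (g : {poly int}) : pQtoC (pZtoQ g) = pZtoC g.
Proof. by rewrite -map_poly_comp; apply: eq_map_poly => a /=; rewrite ratr_int. Qed.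

Definition degC (x : algC) : nat := (size (minCpoly x)).-1.

Lemma degC_gt0 (x : algC) : (0 < degC x)%N.
Proof. by rewrite /degC -ltnS prednK ?size_minCpoly // ltnW ?size_minCpoly. Qed.

Lemma degC_lt_size (g : {poly int}) (x : algC) :
  g != 0 -> root (pZtoC g) x -> (degC x < size g)%N.
Proof.
move=> nz_g gx; have [p [Dp _] dv_p] := minCpolyP x.
have szgQ : size (pZtoQ g) = size g by rewrite size_map_inj_poly //; apply: intr_inj.
have nz_gQ : pZtoQ g != 0 by rewrite -size_poly_gt0 szgQ size_poly_gt0.
have : p %| pZtoQ g by rewrite -dv_p pZtoQtoC.
move/(dvdp_leq nz_gQ); rewrite szgQ /degC Dp size_map_poly.
by case: (size p) => [_|//]; rewrite size_poly_gt0.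
Qed.

(* Tower law: the degree of an element P(x) of Q(x) divides the degree of x.
   We realize Q(x) as the field extension of Q generated by a root of the
   minimal polynomial of x and compare the dimensions of Q(P(x)) and Q(x). *)
Lemma degC_horner_dvd (x : algC) (P : {poly rat}) :
  (degC (pQtoC P).[x] %| degC x)%N.
Proof.
have [p [Dp mon_p] dv_p] := minCpolyP x.
have nz_p : p != 0 by apply: monic_neq0.
have px0 : root (pQtoC p) x by rewrite dv_p.
have irr_p : irreducible_poly p.
  by apply/(subfx_irreducibleP px0 nz_p)=> q qx0 nzq; rewrite dvdp_leq // -dv_p.
pose L := SubFieldExtType px0 irr_p.
pose phi : {rmorphism L -> algC} := @subfx_inj _ _ QtoC x p.
pose y : L := subfx_eval QtoC x p P.
have phiy : phi y = (pQtoC P).[x] by exact: subfx_inj_eval.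
have phiA (a : rat) : phi a%:A = QtoC a by exact: subfx_inj_base.
have phimap (q : {poly rat}) :
    phi (map_poly (in_alg L) q).[y] = (pQtoC q).[(pQtoC P).[x]].
  rewrite -horner_map /= -map_poly_comp -phiy; congr (_.[_]).
  by apply: eq_map_poly => a /=; rewrite phiA.
have := field_dimS (subvf <<1; y>>%VS).
rewrite dim_Fadjoin dimv1 muln1 dimvf /degC Dp size_map_poly.
suff -> : (size (minCpoly (pQtoC P).[x])).-1 = adjoin_degree 1%VS y by [].
have [r [Dr mon_r] dv_r] := minCpolyP (pQtoC P).[x].
rewrite Dr size_map_poly.
have [q Dq] : exists q, minPoly 1 y = map_poly (in_alg L) q.
  by apply/polyOver1P; apply: minPolyOver.
have szq : size q = (adjoin_degree 1%VS y).+1.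
  by rewrite -(size_map_poly (in_alg L) q) -Dq size_minPoly.
apply/eqP; rewrite eqn_leq; apply/andP; split.
  have : r %| q.
    rewrite -dv_r /root -phimap -Dq.
    by move/rootP: (root_minPoly 1%VS y) => ->; rewrite rmorph0.
  have nzq : q != 0 by rewrite -size_poly_gt0 szq.
  by move/dvdp_leq => /(_ nzq); rewrite szq; case: (size r).
have : minPoly 1 y %| map_poly (in_alg L) r.
  apply: minPoly_dvdp; first by apply/polyOver1P; exists r.
  apply/rootP; apply: (fmorph_inj phi); rewrite phimap rmorph0.
  by apply/rootP; rewrite dv_r.
have nzr : map_poly (in_alg L) r != 0 by rewrite map_poly_eq0 monic_neq0.
move/dvdp_leq => /(_ nzr); rewrite size_minPoly size_map_poly.
by case: (size r).
Qed.

(* A root of (X+1)^(2^t) + c with t > 0 and c = 1 mod 4 has degree 2^t: by the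
   Eisenstein-type criterion its minimal polynomial is the whole polynomial. *)
Lemma degC_XaddC_pow2_root (t c : nat) (y : algC) : (0 < t)%N -> (c %% 4 = 1)%N ->
  (y + 1) ^+ (2 ^ t) + c%:R = 0 -> degC y = (2 ^ t)%N.
Proof.
move=> t0 c4 y0.
pose F : {poly int} := ('X + 1) ^+ (2 ^ t) + c%:R%:P.
have szF : size F = (2 ^ t).+1%N.
  rewrite /F size_polyDl size_exp_XaddC // size_polyC.
  by case: (_ != _); rewrite // ltnS expn_gt0.
have nzF : F != 0 by rewrite -size_poly_gt0 szF.
have [p [Dp _] dv_p] := minCpolyP y.
have : p %| pZtoQ F.
  rewrite -dv_p pZtoQtoC /root rmorphD rmorphXn /= rmorphD /= map_polyX !map_polyC.
  by rewrite /= rmorph1 rmorph_nat !hornerE y0.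
case/dvdpP_rat_int => p1 [a a0 Dp1] [r Dr].
have szp : size p = size p1.
  by rewrite Dp1 size_scale // size_map_inj_poly //; apply: intr_inj.
have szp1 : (1 < size p1)%N by have := size_minCpoly y; rewrite Dp size_map_poly szp.
have := XaddC_pow2_indecomposable t0 c4 Dr; rewrite leqNgt szp1 /= => szr.
have nz_p1 : p1 != 0 by rewrite -size_poly_gt0 ltnW.
have nzr : r != 0 by apply: contraNneq nzF => r0; rewrite Dr r0 mulr0.
have szr1 : size r = 1%N by apply/eqP; rewrite eqn_leq szr lt0n size_poly_eq0.
have : size F = size p1 by rewrite Dr size_mul // szr1 addn1.
by rewrite /degC Dp size_map_poly szp szF => <-.
Qed.

Lemma pow2_dvd_degC (x : algC) (P : {poly rat}) (t c : nat) :
  (0 < t)%N -> (c %% 4 = 1)%N -> (pQtoC P).[x] ^+ (2 ^ t) = - c%:R ->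
  (2 ^ t %| degC x)%N.
Proof.
move=> t0 c4 Px; have := degC_horner_dvd x (P - 1).
rewrite rmorphB /= rmorph1 hornerD hornerN hornerC.
by rewrite (degC_XaddC_pow2_root t0 c4) // subrK Px addNr.
Qed.

(* If x^n = -c with n even, the constant term a_0 of the minimal polynomial of
   x (a product of conjugates of x, up to sign) satisfies a_0^n = (-c)^(deg x). *)
Lemma minCpoly_coef0_pow (n c : nat) (x : algC) : ~~ odd n -> x ^+ n = - c%:R ->
  (minCpoly x)`_0 ^+ n = (- c%:R) ^+ degC x.
Proof.
move=> en xn; have [p [Dp mon_p] dv_p] := minCpolyP x.
have [rs Drs] := closed_field_poly_normal (minCpoly x).
rewrite Dp lead_coef_map /= (monicP mon_p) rmorph1 scale1r -Dp in Drs.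
have dvp : p %| 'X^n + c%:R%:P.
  rewrite -dv_p rmorphD /= map_polyXn map_polyC /= /root hornerD hornerXn hornerC.
  by rewrite xn rmorph_nat addNr.
have rs_roots z : z \in rs -> z ^+ n = - c%:R.
  move=> zrs; have : root (pQtoC ('X^n + c%:R%:P)) z.
    apply: (root_dvdp (p := pQtoC p)); first by rewrite dvdp_map.
    by rewrite -Dp Drs root_prod_XsubC.
  rewrite rmorphD /= map_polyXn map_polyC /= /root hornerD hornerXn hornerC.
  by rewrite rmorph_nat addr_eq0 => /eqP.
have szrs : size rs = degC x by rewrite /degC Drs size_prod_XsubC.
rewrite Drs coef0_prod_XsubC szrs exprMn -exprM mulnC exprM -signr_odd (negPf en).
rewrite expr0 expr1n mul1r -prodrXl (eq_big_seq (fun _ => - c%:R)); last by move=> z /rs_roots.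
by rewrite big_const_seq count_predT szrs; elim: (degC x) => // k IH; rewrite iterS IH exprS.
Qed.

Lemma norm_pow_root (n c : nat) (x : algC) :
  (0 < n)%N -> ~~ odd n -> x ^+ n = - c%:R -> exists T : nat, (T ^ n = c ^ degC x)%N.
Proof.
move=> n0 en xn; have a0n := minCpoly_coef0_pow en xn.
have [p [Dp _] _] := minCpolyP x.
have a0_int : (minCpoly x)`_0 \is a Num.int.
  apply: Cint_rat_Aint; first by rewrite Dp coef_map Crat_rat.
  apply: (@root_monic_Aint ('X^n - (((- c%:R) ^+ degC x : int)%:~R)%:P)).
  - by rewrite /root !hornerE a0n rmorphXn rmorphN /= rmorph_nat subrr.
  - exact: monicXnsubC.
  apply/polyOverP => i; rewrite coefB coefXn coefC.
  by apply: rpredB; [apply: rpred_nat | case: (_ == _); [apply: rpred_int | apply: rpred0]].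
case/intrP: a0_int => z Dz; exists `|z|%N; rewrite -abszX.
suff -> : z ^+ n = (- c%:R) ^+ degC x by rewrite abszX abszN natz.
apply: (@intr_inj algC); rewrite rmorphXn /= -Dz a0n.
by rewrite rmorphXn rmorphN /= rmorph_nat.
Qed.

Lemma proper_factor_root (n c : nat) (g h : {poly int}) :
  'X^n + c%:R%:P = g * h -> (1 < size g)%N -> (1 < size h)%N ->
  exists2 x : algC, x ^+ n = - c%:R & (degC x < n)%N.
Proof.
move=> Df szg szh.
have [x gx] : exists x, root (pZtoC g) x.
  by apply/closed_rootP; rewrite size_map_inj_poly ?gtn_eqF //; apply: intr_inj.
exists x.
  have : root (pZtoC ('X^n + c%:R%:P)) x by rewrite Df rmorphM rootM gx.
  rewrite rmorphD /= map_polyXn map_polyC /= /root hornerD hornerXn hornerC.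
  by rewrite rmorph_nat addr_eq0 => /eqP.
have nz_g : g != 0 by rewrite -size_poly_gt0 ltnW.
have nz_h : h != 0 by rewrite -size_poly_gt0 ltnW.
have szf : (size (g * h)%R <= n.+1)%N.
  rewrite -Df (leq_trans (size_polyD _ _)) // size_polyXn size_polyC geq_max leqnn.
  by case: (_ != _).
rewrite size_mul // -subn1 in szf.
have := degC_lt_size nz_g gx; move: szh szf.
by move: (degC x) (size g) (size h) => d a b; lia.
Qed.

Theorem corollary2 (r n b : nat) :
  (1 <= r)%N -> (0 < n)%N -> (2 ^ r %| n)%N -> (0 < b)%N ->
  propP n b ->
  reducible_Z ('X^n + ((b ^ (2 ^ r))%N)%:R%:P : {poly int}) ->
  ~~ odd b /\ ~~ odd (n %/ 2 ^ r)%N.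
Proof.
move=> r_gt0 n_gt0 m_dvd_n b_gt0 Pb [g [h [szg szh Df]]].
set m := (2 ^ r)%N in m_dvd_n Df *; set c := (b ^ m)%N in Df.
set q := (n %/ m)%N; have Dn : n = (q * m)%N by rewrite divnK.
have [x xn degx_lt_n] := proper_factor_root Df szg szh.
have [T Tn] : exists T : nat, (T ^ n = c ^ degC x)%N.
  by apply: norm_pow_root xn; rewrite // Dn oddM oddX gtn_eqF // andbF.
have q_dvd_degx : (q %| degC x)%N.
  have : (n %| m * degC x)%N by apply: (propP_dvd_exponent Pb (T := T)); rewrite Tn expnM.
  by rewrite Dn mulnC dvdn_pmul2l // expn_gt0.
have n_ndvd_degx : ~~ (n %| degC x)%N by rewrite gtnNdvd // degC_gt0.
split; apply: contra n_ndvd_degx.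
- (* If b is odd, then c = 1 mod 4; writing n = 2^t q' with q' odd,
     y = x^q' satisfies y^(2^t) = -c, so n = 2^t q' divides deg x. *)
  move=> b_odd; have [q' q'_odd Dn'] := pfactor_coprime (isT : prime 2) n_gt0.
  set t := logn 2 n in Dn'.
  have t_gt0 : (0 < t)%N by apply: leq_trans r_gt0 _; rewrite -pfactor_dvdn.
  have c4 : (c %% 4 = 1)%N by rewrite odd_pow_even_mod4 // oddX gtn_eqF.
  have : (2 ^ t %| degC x)%N.
    apply: (pow2_dvd_degC (P := 'X^q') t_gt0 c4).
    by rewrite map_polyXn hornerXn -exprM -Dn' xn.
  have q'_dvd_q : (q' %| q)%N.
    have : (q' %| q * m)%N by rewrite -Dn Dn' dvdn_mulr.
    by rewrite Gauss_dvdl // coprimeXr // coprime_sym.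
  rewrite Dn' Gauss_dvd ?coprimeXr 1?coprime_sym // => ->.
  by rewrite (dvdn_trans q'_dvd_q).
- (* If q = n/m is odd, y = x^q / b satisfies y^m = -1, so m | deg x;
     together with q | deg x and gcd(q, m) = 1 this gives n | deg x. *)
  move=> q_odd; have : (m %| degC x)%N.
    apply: (pow2_dvd_degC (P := (b%:R)^-1 *: 'X^q) r_gt0 (erefl : (1 %% 4 = 1)%N)).
    rewrite map_polyZ /= map_polyXn hornerZ hornerXn fmorphV rmorph_nat mulrC.
    rewrite expr_div_n -exprM -/m -Dn xn -natrX -/c mulNr divff ?pnatr_eq0 //.
    by rewrite /c expn_eq0 negb_and -lt0n b_gt0.
  by rewrite Dn Gauss_dvd ?q_dvd_degx // coprimeXr // coprimen2.
Qed.
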